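(* Consider the waning-immunity model described in the context. There exists a constant $C>0$ such that for all sufficiently small $\delta\ge0$, the set of values $I^*$ of endemic equilibria with $I^*\in[0,1]$ is contained in $J_1\cup J_2$, where $J_i=[y_i-C\sqrt\delta,\,y_i+C\sqrt\delta]$ and $y_1\le y_2$ are the (real) roots of $$1+\frac{r}{\beta_0x+\mu}-\frac{\beta_n}{\beta_nx+\mu+\omega_n}-\frac{\omega_n\beta_0}{(\beta_0x+\mu)(\beta_nx+\mu+\omega_n)}=0.$$ In particular, if this equation has no real roots, or no roots in $[0,1]$, then for $\delta$ small enough there are no endemic equilibria with $I^*\in[0,1]$. The latter is the case when $(\omega_n+\mu)(\mu+r)>\beta_0\omega_n+\beta_n\mu$. If $(\omega_n+\mu)(\mu+r)<\beta_0\omega_n+\beta_n\mu$, then the equation has exactly one root $y$ in $[0,1]$; and if $(\omega_n+\mu)(\mu+r)=\beta_0\omega_n+\beta_n\mu$, then $x=0$ is a root.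
   Context: Model: Fix an integer $n\ge 1$ and parameters $\delta\ge 0$ (rate of waning immunity), $\omega\ge 0$ (vaccination rate), $r>0$ (recovery rate), $\mu>0$ (birth = death rate), coverages $p_0=0$, $p_1,\dots,p_n\in[0,1]$, and transmission rates $0\le\beta_0\le\beta_1\le\dots\le\beta_n$ with $\beta_0<\beta_n$. Write $\omega_i=p_i\omega$, $\delta_i=(1-p_i)\delta$ (so $\delta_0=\delta$). The ODE system for $(S_0,\dots,S_n,I)$ is $$S_0'=\sum_{i=1}^n\omega_iS_i-\delta S_0+rI-\beta_0IS_0-\mu S_0,$$ $$S_i'=-\omega_iS_i+\delta_{i-1}S_{i-1}-\delta_iS_i-\beta_iIS_i-\mu S_i\quad(1\le i\le n-1),$$ $$S_n'=\mu-\omega_nS_n+\delta_{n-1}S_{n-1}-\beta_nIS_n-\mu S_n,$$ $$I'=I\sum_{i=0}^n\beta_iS_i-rI-\mu I,$$ with the normalization $\sum_iS_i+I=1$. An endemic equilibrium is an equilibrium $(S_0^*,\dots,S_n^*,I^* )$ of this system satisfying the normalization with $I^*\neq0$. *)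

From HB Require Import structures.
From mathcomp Require Import all_boot all_order all_algebra.
From mathcomp Require Import reals.
Set Implicit Arguments. Unset Strict Implicit. Unset Printing Implicit Defensive.
Import Order.TTheory GRing.Theory Num.Theory.
Local Open Scope ring_scope.

(* Compartments are indexed by nat; only indices 0..n matter.
   p i = coverage, omega_i = p i * omega, delta_i = (1 - p i) * delta. *)
Definition is_equilibrium (R : realType) (n : nat) (delta omega r mu : R)
  (p beta : nat -> R) (S : nat -> R) (I : R) : Prop :=
  let w i := p i * omega in
  let d i := (1 - p i) * delta in
  [/\ \sum_(1 <= i < n.+1) w i * S i - delta * S 0%N + r * I
        - beta 0%N * I * S 0%N - mu * S 0%N = 0,
      (forall i, (1 <= i < n)%N ->
        - w i * S i + d i.-1 * S i.-1 - d i * S i - beta i * I * S i - mu * S i = 0),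
      mu - w n * S n + d n.-1 * S n.-1 - beta n * I * S n - mu * S n = 0,
      I * (\sum_(0 <= i < n.+1) beta i * S i) - r * I - mu * I = 0 &
      \sum_(0 <= i < n.+1) S i + I = 1].

Definition is_endemic_equilibrium (R : realType) (n : nat) (delta omega r mu : R)
  (p beta : nat -> R) (S : nat -> R) (I : R) : Prop :=
  is_equilibrium n delta omega r mu p beta S I /\ I <> 0.

Definition is_root_eq (R : realType) (b0 bn wn r mu x : R) : Prop :=
  [/\ b0 * x + mu <> 0, bn * x + mu + wn <> 0 &
      1 + r / (b0 * x + mu) - bn / (bn * x + mu + wn)
        - wn * b0 / ((b0 * x + mu) * (bn * x + mu + wn)) = 0].

From HB Require Import structures.
From mathcomp Require Import all_boot all_order all_algebra.
From mathcomp Require Import reals.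
From mathcomp Require Import ring lra.
Import Order.TTheory GRing.Theory Num.Theory.
Local Open Scope ring_scope.

(* At an endemic equilibrium the middle compartments satisfy a first-order
   linear recurrence, so S_i = lambda_i S_0 with lambda_i >= 0 (0 < i < n), and
   their equations telescope to
     sum_i (omega_i + beta_i I + mu) S_i + delta_(n-1) S_(n-1) = delta S_0.
   Eliminating r (by the I equation divided by I) and S_n (by the S_n equation
   and the normalization), the root equation cleared of its denominators reads
     Q(I) = (beta_n - beta_0) delta_(n-1) S_(n-1) + D sum_i (beta_i - beta_0) S_i,
   with D = beta_n I + mu + omega_n.  If S_0 <> 0 the telescoped identity bounds
   delta_(n-1) lambda_(n-1) and mu sum_i lambda_i by delta, and |S_0| <= 1, so
   Q(I) = O(delta).  Q is a nonconstant quadratic, and a point where such a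
   polynomial is O(delta) lies O(sqrt delta) from one of its zeros: factor it,
   or, when the discriminant is negative, use that it is bounded away from 0.
   Zeros of Q near [0, 1] solve the root equation.  The other claims follow
   from the signs of Q(0) = (omega_n + mu)(mu + r) - (beta_0 omega_n + beta_n mu)
   and Q(1) > 0, the leading coefficient of Q being nonnegative. *)

Lemma linear_recurrence_prod (R : fieldType) (n : nat) (c d S : nat -> R) :
  (forall i, (i.+1 < n)%N -> c i.+1 != 0) ->
  (forall i, (i.+1 < n)%N -> c i.+1 * S i.+1 = d i * S i) ->
  forall i, (i < n)%N -> S i = (\prod_(0 <= j < i) (d j / c j.+1)) * S 0%N.
Proof.
move=> c_neq0 rec; elim=> [|i IH] lt_in; first by rewrite big_geq // mul1r.
apply: (mulfI (c_neq0 _ lt_in)); rewrite rec // IH ?(ltnW lt_in) // big_nat_recr //=.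
by field; exact: c_neq0.
Qed.

Lemma nondecreasing_bounds {R : numDomainType} {n : nat} {f : nat -> R} :
  (forall i, (i < n)%N -> f i <= f i.+1) ->
  forall i, (i <= n)%N -> f 0%N <= f i <= f n.
Proof.
move=> f_step; have f_homo : {in [pred i | i <= n]%N &, {homo f : i j / (i <= j)%N >-> i <= j}}.
  apply: homo_leq_in => [x|y x z|i j _|i _ /=]; [exact: lexx|exact: le_trans| |exact: f_step].
  by rewrite !inE => le_jn k /andP[_ /ltnW/leq_trans]; apply.
by move=> i le_in; rewrite !f_homo ?inE.
Qed.

Lemma big_nat_first_last {V : nmodType} (n : nat) (F : nat -> V) : (0 < n)%N ->
  \sum_(0 <= i < n.+1) F i = F 0%N + \sum_(1 <= i < n) F i + F n.
Proof. by move=> n_gt0; rewrite big_nat_recr //= big_ltn. Qed.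

Lemma quadratic_nonneg_root_unique (R : realDomainType) (a b c y z : R) :
  0 <= a -> c < 0 -> 0 <= y -> 0 <= z ->
  a * y ^+ 2 + b * y + c = 0 -> a * z ^+ 2 + b * z + c = 0 -> y = z.
Proof.
move=> a_ge0 c_lt0 y_ge0 z_ge0 qy qz; apply/eqP; rewrite -subr_eq0; apply/eqP.
have : (y - z) * (a * (y + z) + b) = 0 by rewrite -[RHS](subrr c); nra.
move/eqP; rewrite mulf_eq0 => /orP[/eqP // | /eqP slope0].
have : c = a * y * z by nra.
by have := mulr_ge0 (mulr_ge0 a_ge0 y_ge0) z_ge0; lra.
Qed.

Section SqrtStability.
Context {R : rcfType}.

Definition sqrt_stable (f : R -> R) (K : R) : Prop :=
  exists2 C, 0 < C & exists2 d1, 0 < d1 &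
    forall dl x, 0 <= dl -> dl < d1 -> `|f x| <= K * dl ->
    exists2 y, f y = 0 & `|x - y| <= C * Num.sqrt dl.

Lemma eq_sqrt_stable {f g : R -> R} {K : R} :
  f =1 g -> sqrt_stable f K -> sqrt_stable g K.
Proof.
move=> fg [C C_gt0 [d1 d1_gt0 near]]; exists C => //; exists d1 => // dl x dl_ge0 dl_lt.
by rewrite -fg => /(near _ _ dl_ge0 dl_lt) [y]; rewrite fg; exists y.
Qed.

Lemma linear_sqrt_stable (b c K : R) : b != 0 -> 0 <= K ->
  sqrt_stable (fun x => b * x + c) K.
Proof.
move=> b_neq0 K_ge0; have b_gt0 : 0 < `|b| by rewrite normr_gt0.
exists ((K + 1) / `|b|); first by rewrite divr_gt0 // ltr_wpDl.
exists 1 => // dl x dl_ge0 dl_lt1 small; exists (- c / b); first by field.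
have s_ge0 := sqrtr_ge0 dl; have ss := sqr_sqrtr dl_ge0.
have dl_le_sqrt : dl <= Num.sqrt dl by nra.
have -> : x - - c / b = (b * x + c) / b by field.
rewrite normrM normfV mulrAC ler_pM2r ?invr_gt0 //; nra.
Qed.

Lemma quadratic_sqrt_stable (a b c K : R) : a != 0 -> 0 <= K ->
  sqrt_stable (fun x => a * x ^+ 2 + b * x + c) K.
Proof.
move=> a_neq0 K_ge0; have a_gt0 : 0 < `|a| by rewrite normr_gt0.
set disc := b ^+ 2 - 4 * a * c.
have complete_square x : 4 * a * (a * x ^+ 2 + b * x + c) = (2 * a * x + b) ^+ 2 - disc.
  by rewrite /disc; ring.
have [disc_neg|disc_ge0] := ltrP disc 0.
  exists 1 => //; exists (- disc / (4 * `|a| * (K + 1))).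
    by rewrite divr_gt0 ?oppr_gt0 // !mulr_gt0 // ltr_wpDl.
  move=> dl x dl_ge0; rewrite ltr_pdivlMr ?mulr_gt0 ?ltr_wpDl // => dl_small small; exfalso.
  have : `|4 * a * (a * x ^+ 2 + b * x + c)| <= 4 * `|a| * (K * dl).
    by rewrite !normrM ger0_norm // ler_pM2l ?mulr_gt0.
  rewrite complete_square; have := ler_norm ((2 * a * x + b) ^+ 2 - disc).
  have := sqr_ge0 (2 * a * x + b); nra.
set s := Num.sqrt disc; have ss := sqr_sqrtr disc_ge0.
set C := Num.sqrt ((K + 1) / `|a|); have CC : C ^+ 2 = (K + 1) / `|a|.
  by rewrite sqr_sqrtr // divr_ge0 // addr_ge0.
exists C; first by rewrite sqrtr_gt0 divr_gt0 // ltr_wpDl.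
exists 1 => // dl x dl_ge0 _ small.
set y1 := (- b + s) / (2 * a); set y2 := (- b - s) / (2 * a).
have factor z : a * z ^+ 2 + b * z + c = a * ((z - y1) * (z - y2)).
  apply/eqP; rewrite -subr_eq0; apply/eqP.
  transitivity ((s ^+ 2 - disc) / (4 * a)); first by rewrite /y1 /y2 /disc; field.
  by rewrite ss subrr mul0r.
have t_ge0 := sqrtr_ge0 dl; have tt := sqr_sqrtr dl_ge0; have C_ge0 : 0 <= C := sqrtr_ge0 _.
have prod : `|x - y1| * `|x - y2| <= (C * Num.sqrt dl) ^+ 2.
  rewrite -(ler_pM2l a_gt0) exprMn CC tt -!normrM -factor.
  have -> : `|a| * ((K + 1) / `|a| * dl) = (K + 1) * dl by field; rewrite gt_eqF.
  lra.
have [near1|far1] := lerP `|x - y1| (C * Num.sqrt dl).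
  by exists y1; rewrite // factor subrr mul0r mulr0.
exists y2; first by rewrite factor subrr mulr0 mulr0.
rewrite leNgt; apply/negP => far2.
have := ltr_pM (mulr_ge0 C_ge0 t_ge0) (mulr_ge0 C_ge0 t_ge0) far1 far2.
by rewrite -expr2 -/C; lra.
Qed.

End SqrtStability.

(* The root equation multiplied by (b0 x + mu) (bn x + mu + wn). *)
Definition endemic_poly {R : pzRingType} (b0 bn wn r mu x : R) : R :=
  (b0 * x + mu) * (bn * x + mu + wn) + r * (bn * x + mu + wn)
  - bn * (b0 * x + mu) - wn * b0.

Section EndemicPoly.
Context {R : realType} {b0 bn wn r mu : R}.
Hypothesis params : [/\ 0 <= b0, b0 < bn, 0 <= wn, 0 < r & 0 < mu].

Local Notation Q := (endemic_poly b0 bn wn r mu).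
Local Notation endemic_root := (is_root_eq b0 bn wn r mu).

Lemma endemic_polyE x :
  Q x = b0 * bn * x ^+ 2 + (b0 * (mu + wn) + bn * (mu + r - b0)) * x + Q 0.
Proof. by rewrite /endemic_poly; ring. Qed.

Lemma endemic_poly0 : Q 0 = (wn + mu) * (mu + r) - (b0 * wn + bn * mu).
Proof. by rewrite /endemic_poly; ring. Qed.

Lemma root_eq_lhsE x : b0 * x + mu != 0 -> bn * x + mu + wn != 0 ->
  1 + r / (b0 * x + mu) - bn / (bn * x + mu + wn)
    - wn * b0 / ((b0 * x + mu) * (bn * x + mu + wn))
  = Q x / ((b0 * x + mu) * (bn * x + mu + wn)).
Proof. by move=> den0 den1; rewrite /endemic_poly; field; rewrite den0 den1. Qed.

Lemma endemic_root_poly x : endemic_root x -> Q x = 0.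
Proof.
case=> /eqP den0 /eqP den1; rewrite root_eq_lhsE // => /eqP.
by rewrite mulf_eq0 invr_eq0 mulf_eq0 (negPf den0) (negPf den1) => /orP[/eqP|].
Qed.

Lemma endemic_root_of_poly x : - mu < bn * x -> Q x = 0 -> endemic_root x.
Proof.
have [b0_ge0 b0_lt_bn wn_ge0 _ mu_gt0] := params => bnx_gt Qx0.
have den1_gt0 : 0 < bn * x + mu + wn by lra.
have den0_gt0 : 0 < b0 * x + mu.
  have [x_ge0|x_lt0] := lerP 0 x; first by have := mulr_ge0 b0_ge0 x_ge0; lra.
  have : bn * x <= b0 * x by rewrite ler_wnM2r ?ltW.
  lra.
split; [exact/eqP/lt0r_neq0 | exact/eqP/lt0r_neq0 |].
by rewrite root_eq_lhsE ?lt0r_neq0 // Qx0 mul0r.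
Qed.

Lemma endemic_poly1_gt0 : 0 < Q 1.
Proof.
have [b0_ge0 b0_lt_bn wn_ge0 r_gt0 mu_gt0] := params.
have -> : Q 1 = b0 * mu + mu * (mu + wn) + r * (bn + mu + wn) by rewrite /endemic_poly; ring.
have := mulr_ge0 b0_ge0 (ltW mu_gt0).
have := mulr_gt0 mu_gt0 (ltr_wpDr wn_ge0 mu_gt0).
have := mulr_gt0 r_gt0 (ltr_wpDr wn_ge0 (ltr_wpDl (ltW (le_lt_trans b0_ge0 b0_lt_bn)) mu_gt0)).
lra.
Qed.

Lemma endemic_poly_ge_poly0 x : 0 <= Q 0 -> 0 <= x -> Q 0 <= Q x.
Proof.
have [b0_ge0 b0_lt_bn wn_ge0 r_gt0 mu_gt0] := params => Q0_ge0 x_ge0.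
have b0_le : b0 <= mu + r.
  rewrite leNgt; apply/negP => lt_b0; move: Q0_ge0; rewrite endemic_poly0.
  by have := lt_trans lt_b0 b0_lt_bn; nra.
have slope_ge0 : 0 <= b0 * (mu + wn) + bn * (mu + r - b0).
  by rewrite addr_ge0 ?mulr_ge0 ?subr_ge0 ?addr_ge0 ?(ltW mu_gt0) // ltW ?(le_lt_trans b0_ge0).
have := mulr_ge0 (mulr_ge0 b0_ge0 (ltW (le_lt_trans b0_ge0 b0_lt_bn))) (sqr_ge0 x).
by rewrite [Q x]endemic_polyE; have := mulr_ge0 slope_ge0 x_ge0; lra.
Qed.

Lemma endemic_unit_root_unique :
  Q 0 < 0 -> exists y, (0 <= y <= 1 /\ endemic_root y) /\
                        forall z, 0 <= z <= 1 -> endemic_root z -> z = y.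
Proof.
have [b0_ge0 b0_lt_bn _ _ mu_gt0] := params => Q0_lt0.
have bn_gt0 : 0 < bn := le_lt_trans b0_ge0 b0_lt_bn.
pose p := (b0 * bn) *: 'X^2 + (b0 * (mu + wn) + bn * (mu + r - b0)) *: 'X + (Q 0)%:P.
have pE x : p.[x] = Q x by rewrite [RHS]endemic_polyE !hornerE.
have [y /andP[y_ge0 y_le1] /rootP py] : exists2 y, 0 <= y <= 1 & root p y.
  by apply: poly_ivt; rewrite ?ler01 // !pE (ltW Q0_lt0) ltW ?endemic_poly1_gt0.
have root_unit x : 0 <= x -> Q x = 0 -> endemic_root x.
  by move=> x_ge0; apply: endemic_root_of_poly; have := mulr_ge0 (ltW bn_gt0) x_ge0; lra.
exists y; split; first by rewrite y_ge0 y_le1; split=> //; apply: root_unit; rewrite // -pE.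
move=> z /andP[z_ge0 _] /endemic_root_poly Qz.
apply: (@quadratic_nonneg_root_unique _ (b0 * bn) (b0 * (mu + wn) + bn * (mu + r - b0)) (Q 0));
  by rewrite ?mulr_ge0 ?(ltW bn_gt0) // -endemic_polyE // -pE.
Qed.

Lemma poly0_gt0_of_no_unit_root :
  (forall x, endemic_root x -> ~ (0 <= x <= 1)) -> 0 < Q 0.
Proof.
have [_ _ _ _ mu_gt0] := params => no_root.
case: ltrgtP => // [Q0_lt0 | Q0_eq0].
  by have [y [[y01 /no_root]]] := endemic_unit_root_unique Q0_lt0.
exfalso; apply: (no_root 0); rewrite ?lexx ?ler01 //.
by apply: endemic_root_of_poly; rewrite ?mulr0 ?oppr_lt0.
Qed.

Lemma endemic_sqrt_stable K : 0 <= K -> sqrt_stable Q K.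
Proof.
have [b0_ge0 b0_lt_bn _ r_gt0 mu_gt0] := params => K_ge0.
have bn_gt0 : 0 < bn := le_lt_trans b0_ge0 b0_lt_bn.
have [b0_eq0 | b0_neq0] := eqVneq b0 0.
  apply: (eq_sqrt_stable _ (linear_sqrt_stable (bn * (mu + r)) (Q 0) K _ K_ge0)).
    by move=> x; rewrite [RHS]endemic_polyE b0_eq0; ring.
  by rewrite mulf_neq0 ?gt_eqF ?addr_gt0.
apply: (eq_sqrt_stable _ (quadratic_sqrt_stable
  (b0 * bn) (b0 * (mu + wn) + bn * (mu + r - b0)) (Q 0) K _ K_ge0)).
  by move=> x; rewrite [RHS]endemic_polyE.
by rewrite mulf_neq0 // gt_eqF.
Qed.

Lemma endemic_near_root K : 0 <= K ->
  exists2 C, 0 < C & exists2 d0, 0 < d0 & forall dl x, 0 <= dl -> dl < d0 -> 0 <= x ->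
    `|Q x| <= K * dl -> exists2 y, endemic_root y & `|x - y| <= C * Num.sqrt dl.
Proof.
have [b0_ge0 b0_lt_bn _ _ mu_gt0] := params => K_ge0.
have bn_gt0 : 0 < bn := le_lt_trans b0_ge0 b0_lt_bn.
have [C C_gt0 [d1 d1_gt0 near]] := endemic_sqrt_stable _ K_ge0.
have z_gt0 : 0 < mu / (bn * C) by rewrite divr_gt0 ?mulr_gt0.
exists C => //; exists (Num.min d1 ((mu / (bn * C)) ^+ 2)).
  by rewrite lt_min d1_gt0 exprn_gt0.
move=> dl x dl_ge0; rewrite lt_min => /andP[dl_lt1 dl_lt2] x_ge0.
move=> /(near _ _ dl_ge0 dl_lt1) [y Qy close].
exists y => //; apply: endemic_root_of_poly => //.
have : Num.sqrt dl < mu / (bn * C) by rewrite -(gtr0_norm z_gt0) -sqrtr_sqr ltr_sqrt ?exprn_gt0.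
rewrite ltr_pdivlMr ?mulr_gt0 // => small.
have : bn * `|x - y| <= bn * (C * Num.sqrt dl) by rewrite ler_pM2l.
have := ler_norm (x - y); have := mulr_ge0 (ltW bn_gt0) x_ge0; nra.
Qed.

Lemma endemic_poly_eventually_gt K : 0 <= K -> 0 < Q 0 ->
  exists2 d0, 0 < d0 & forall dl x, 0 <= dl -> dl < d0 -> 0 <= x -> K * dl < `|Q x|.
Proof.
move=> K_ge0 Q0_gt0; have K1_gt0 : 0 < K + 1 := ltr_wpDl K_ge0 ltr01.
exists (Q 0 / (K + 1)); first exact: divr_gt0.
move=> dl x dl_ge0; rewrite ltr_pdivlMr // => dl_lt x_ge0.
by have := endemic_poly_ge_poly0 _ (ltW Q0_gt0) x_ge0; have := ler_norm (Q x); lra.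
Qed.

End EndemicPoly.

(* An equilibrium in reduced form: the middle compartments are S_i = lambda_i S0
   (0 < i < n), with m = sum lambda_i, phi = sum beta_i lambda_i and
   kappa = sum (omega_i + beta_i I + mu) lambda_i, and eta S0 = delta_(n-1) S_(n-1)
   is the inflow into Sn. *)
Lemma reduced_polyE {R : comPzRingType} {b0 bn wn r mu I S0 Sn phi m eta : R} :
  (bn * I + mu + wn) * Sn = mu + eta * S0 ->
  (b0 + phi) * S0 + bn * Sn = r + mu ->
  (1 + m) * S0 + Sn + I = 1 ->
  endemic_poly b0 bn wn r mu I
    = S0 * ((bn - b0) * eta + (bn * I + mu + wn) * (phi - b0 * m)).
Proof.
move=> eqSn eqI mass; apply/eqP; rewrite -subr_eq0; apply/eqP.
transitivity ((bn - b0) * ((bn * I + mu + wn) * Sn - (mu + eta * S0))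
  + b0 * (bn * I + mu + wn) * ((1 + m) * S0 + Sn + I - 1)
  - (bn * I + mu + wn) * ((b0 + phi) * S0 + bn * Sn - (r + mu))).
  by rewrite /endemic_poly; ring.
by rewrite eqSn eqI mass !subrr !mulr0 addr0 subr0.
Qed.

Lemma reduced_S0_le1 {R : realFieldType} {bn wn mu I S0 Sn m eta : R} :
  0 <= bn -> 0 <= wn -> 0 < mu -> 0 <= I <= 1 -> 0 <= eta -> 0 <= m ->
  (bn * I + mu + wn) * Sn = mu + eta * S0 ->
  (1 + m) * S0 + Sn + I = 1 ->
  `|S0| <= 1.
Proof.
move=> bn_ge0 wn_ge0 mu_gt0 /andP[I_ge0 I_le1] eta_ge0 m_ge0 eqSn mass.
set D := bn * I + mu + wn in eqSn *.
have D_ge_mu : mu <= D by have := mulr_ge0 bn_ge0 I_ge0; rewrite /D => ?; lra.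
have S0_scaled : S0 * (D * (1 + m) + eta) = D * (1 - I) - mu.
  have Sn_mass : Sn = 1 - I - (1 + m) * S0 by lra.
  by move: eqSn; rewrite Sn_mass => ?; nra.
have k_ge : D <= D * (1 + m) + eta by nra.
have k_gt0 : 0 < D * (1 + m) + eta by lra.
have DI_ge0 : 0 <= D * (1 - I) by rewrite mulr_ge0 ?subr_ge0 //; lra.
have DI_le : D * (1 - I) <= D by rewrite ler_piMr ?gerBl //; lra.
have : `|S0 * (D * (1 + m) + eta)| <= D * (1 + m) + eta.
  by rewrite S0_scaled ler_norml; apply/andP; split; lra.
by rewrite normrM (gtr0_norm k_gt0) -ler_pdivlMr // divff ?gt_eqF.
Qed.

Lemma reduced_poly_bound {R : realFieldType}
    (b0 bn wn r mu delta I S0 Sn phi m eta kappa : R) :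
  0 <= b0 <= bn -> 0 <= wn -> 0 < mu -> 0 <= delta -> 0 <= I <= 1 ->
  0 <= eta -> 0 <= m -> b0 * m <= phi <= bn * m -> mu * m <= kappa ->
  (bn * I + mu + wn) * Sn = mu + eta * S0 ->
  (b0 + phi) * S0 + bn * Sn = r + mu ->
  (1 + m) * S0 + Sn + I = 1 ->
  (kappa + eta) * S0 = delta * S0 ->
  `|endemic_poly b0 bn wn r mu I| <= (bn - b0) * (1 + (bn + mu + wn) / mu) * delta.
Proof.
move=> /andP[b0_ge0 b0_le_bn] wn_ge0 mu_gt0 delta_ge0 I01 eta_ge0 m_ge0
  /andP[phi_ge phi_le] kappa_ge eqSn eqI mass balance.
have bn_ge0 := le_trans b0_ge0 b0_le_bn.
have S0_le1 := reduced_S0_le1 bn_ge0 wn_ge0 mu_gt0 I01 eta_ge0 m_ge0 eqSn mass.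
case/andP: I01 => I_ge0 I_le1.
rewrite (reduced_polyE eqSn eqI mass) normrM.
set D := bn * I + mu + wn.
have D_ge_mu : mu <= D by have := mulr_ge0 bn_ge0 I_ge0; rewrite /D => ?; lra.
have D_le : D <= bn + mu + wn by rewrite /D; nra.
have [->|S0_neq0] := eqVneq S0 0.
  by rewrite normr0 mul0r !mulr_ge0 ?subr_ge0 ?addr_ge0 ?divr_ge0 ?addr_ge0; lra.
have {}balance : kappa + eta = delta := mulIf S0_neq0 balance.
have mum_ge0 : 0 <= mu * m by rewrite mulr_ge0 // ltW.
have m_le : m <= delta / mu by rewrite ler_pdivlMr //; lra.
have Dm : D * m <= (bn + mu + wn) / mu * delta.
  by rewrite mulrAC -mulrA; apply: ler_pM => //; lra.
have X_ge0 : 0 <= (bn - b0) * eta + D * (phi - b0 * m).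
  by rewrite addr_ge0 // mulr_ge0 ?subr_ge0 //; lra.
rewrite (ger0_norm X_ge0); apply: le_trans (ler_piMl X_ge0 S0_le1) _.
have : D * (phi - b0 * m) <= D * ((bn - b0) * m) by rewrite ler_pM2l; lra.
have : (bn - b0) * (eta + D * m) <= (bn - b0) * (delta + (bn + mu + wn) / mu * delta).
  by rewrite ler_wpM2l ?subr_ge0 //; lra.
lra.
Qed.

Section Equilibrium.
Context {R : realType} {n : nat} {delta omega r mu : R} {p beta S : nat -> R} {I : R}.
Hypotheses (n_gt0 : (0 < n)%N) (omega_ge0 : 0 <= omega) (mu_gt0 : 0 < mu).
Hypotheses (delta_ge0 : 0 <= delta) (I_ge0 : 0 <= I).
Hypotheses (p0 : p 0%N = 0) (p01 : forall i, (1 <= i <= n)%N -> 0 <= p i <= 1).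
Hypothesis beta0_ge0 : 0 <= beta 0%N.
Hypothesis beta_step : forall i, (i < n)%N -> beta i <= beta i.+1.
Hypothesis equil : is_equilibrium n delta omega r mu p beta S I.

Local Notation w i := (p i * omega).
Local Notation d i := ((1 - p i) * delta).
Local Notation ratio i := (\prod_(0 <= j < i) (d j / (w j.+1 + d j.+1 + beta j.+1 * I + mu))).

Lemma w_ge0 i : (1 <= i <= n)%N -> 0 <= w i.
Proof. by move=> /p01 /andP[p_ge0 _]; rewrite mulr_ge0. Qed.

Lemma d_ge0 i : (i <= n)%N -> 0 <= d i.
Proof.
case: i => [|i] le_in; first by rewrite p0 subr0 mul1r.
by have /andP[_ p_le1] := p01 i.+1 le_in; rewrite mulr_ge0 ?subr_ge0.
Qed.

Lemma beta_ge0 i : (i <= n)%N -> 0 <= beta i.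
Proof. by move=> /(nondecreasing_bounds beta_step) /andP[+ _]; apply: le_trans. Qed.

Lemma middle_proportional i : (i < n)%N -> S i = ratio i * S 0%N.
Proof.
case: equil => _ eqmid _ _ _.
apply: (@linear_recurrence_prod _ n (fun j => w j + d j + beta j * I + mu)) => j lt_jn.
  have le_jn : (j.+1 <= n)%N := ltnW lt_jn.
  have out_ge0 : 0 <= w j.+1 + d j.+1 + beta j.+1 * I.
    by rewrite !addr_ge0 ?w_ge0 ?d_ge0 ?mulr_ge0 ?beta_ge0.
  by rewrite gt_eqF // ltr_wpDl.
by have := eqmid j.+1 lt_jn; rewrite /=; lra.
Qed.

Lemma ratio_ge0 i : (i < n)%N -> 0 <= ratio i.
Proof.
move=> lt_in; rewrite big_nat; apply: prodr_ge0 => j /andP[_ lt_ji].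
have le_jn : (j.+1 <= n)%N := leq_trans lt_ji (ltnW lt_in).
by rewrite divr_ge0 ?d_ge0 ?(ltnW le_jn) // !addr_ge0 ?w_ge0 ?d_ge0 ?mulr_ge0 ?beta_ge0 // ltW.
Qed.

Lemma sum_middle_ratio (f : nat -> R) :
  \sum_(1 <= i < n) f i * S i = (\sum_(1 <= i < n) f i * ratio i) * S 0%N.
Proof.
rewrite mulr_suml; apply: eq_big_nat => i /andP[_ lt_in].
by rewrite middle_proportional // mulrA.
Qed.

Lemma middle_balance :
  \sum_(1 <= i < n) (w i + beta i * I + mu) * S i = delta * S 0%N - d n.-1 * S n.-1.
Proof.
case: equil => _ eqmid _ _ _.
rewrite (telescope_sumr_eq (fun k => - (d k.-1 * S k.-1))) //.
  by rewrite p0 subr0 mul1r opprK addrC.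
by move=> k /eqmid /=; lra.
Qed.

Lemma equilibrium_poly_bound : I != 0 -> I <= 1 ->
  `|endemic_poly (beta 0%N) (beta n) (w n) r mu I|
    <= (beta n - beta 0%N) * (1 + (beta n + mu + w n) / mu) * delta.
Proof.
move=> I_neq0 I_le1; case: equil => _ _ eqSn eqI mass.
have Sn1 : S n.-1 = ratio n.-1 * S 0%N by rewrite middle_proportional // prednK.
set m := \sum_(1 <= i < n) ratio i.
have ratio_mid i : (1 <= i < n)%N -> 0 <= ratio i by case/andP=> _; exact: ratio_ge0.
have beta_mid i : (1 <= i < n)%N -> beta 0%N <= beta i <= beta n.
  by case/andP=> _ /ltnW; exact: nondecreasing_bounds beta_step i.
apply: (@reduced_poly_bound _ _ _ _ _ _ _ _ (S 0%N) (S n)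
  (\sum_(1 <= i < n) beta i * ratio i) m (d n.-1 * ratio n.-1)
  (\sum_(1 <= i < n) (w i + beta i * I + mu) * ratio i)).
- by rewrite beta0_ge0; case/andP: (nondecreasing_bounds beta_step _ (leqnn n)).
- by rewrite w_ge0 // n_gt0 /=.
- by [].
- by [].
- by rewrite I_ge0.
- by rewrite mulr_ge0 ?d_ge0 ?ratio_ge0 ?leq_pred // prednK.
- by rewrite /m big_nat; apply: sumr_ge0 => i /ratio_mid.
- rewrite !mulr_sumr; apply/andP; split; apply: ler_sum_nat => i /[dup] /ratio_mid r_ge0;
    by case/beta_mid/andP => ? ?; rewrite ler_wpM2r.
- rewrite mulr_sumr; apply: ler_sum_nat => i /[dup] /ratio_mid r_ge0 /[dup] /beta_mid/andP[b_ge _].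
  case/andP=> i_ge1 /ltnW le_in.
  by rewrite ler_wpM2r // lerDr addr_ge0 ?w_ge0 ?i_ge1 // mulr_ge0 // (le_trans beta0_ge0).
- by rewrite Sn1 in eqSn; lra.
- have : \sum_(0 <= i < n.+1) beta i * S i = r + mu by apply: (mulIf I_neq0); lra.
  by rewrite big_nat_first_last // sum_middle_ratio; lra.
- have sumS : \sum_(1 <= i < n) S i = m * S 0%N.
    by rewrite mulr_suml; apply: eq_big_nat => i /andP[_ /middle_proportional].
  by rewrite big_nat_first_last // sumS in mass; lra.
- by have := middle_balance; rewrite sum_middle_ratio Sn1; lra.
Qed.

End Equilibrium.

Lemma equilibrium_poly_bound_uniform {R : realType} {n : nat} {omega r mu : R}
    {p beta : nat -> R} :
  (0 < n)%N -> 0 <= omega -> 0 < mu ->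
  p 0%N = 0 -> (forall i, (1 <= i <= n)%N -> 0 <= p i <= 1) ->
  0 <= beta 0%N -> (forall i, (i < n)%N -> beta i <= beta i.+1) ->
  exists2 K, 0 <= K & forall delta S I, 0 <= delta ->
    is_endemic_equilibrium n delta omega r mu p beta S I -> 0 <= I <= 1 ->
    `|endemic_poly (beta 0%N) (beta n) (p n * omega) r mu I| <= K * delta.
Proof.
move=> n_gt0 omega_ge0 mu_gt0 p0 p01 beta0_ge0 beta_step.
have /andP[b0_le_bn _] := nondecreasing_bounds beta_step _ (leqnn n).
have /andP[pn_ge0 _] : 0 <= p n <= 1 by apply: p01; rewrite n_gt0 leqnn.
have wn_ge0 := mulr_ge0 pn_ge0 omega_ge0; have mu_ge0 := ltW mu_gt0.
exists ((beta n - beta 0%N) * (1 + (beta n + mu + p n * omega) / mu)).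
  by rewrite mulr_ge0 ?subr_ge0 // addr_ge0 // divr_ge0 ?addr_ge0 // (le_trans beta0_ge0).
move=> delta S I delta_ge0 [equil /eqP I_neq0] /andP[I_ge0 I_le1].
by apply: (equilibrium_poly_bound (S := S)).
Qed.

Theorem lemma1 (R : realType) (n : nat) (omega r mu : R) (p beta : nat -> R) :
  (1 <= n)%N -> 0 <= omega -> 0 < r -> 0 < mu ->
  p 0%N = 0 -> (forall i, (1 <= i <= n)%N -> 0 <= p i <= 1) ->
  0 <= beta 0%N -> (forall i, (i < n)%N -> beta i <= beta i.+1) ->
  beta 0%N < beta n ->
  let wn := p n * omega in
  let root := is_root_eq (beta 0%N) (beta n) wn r mu in
  (* main claim: equilibrium values I* in [0,1] lie within C sqrt(delta) of a root *)
  (exists C : R, 0 < C /\ exists delta0 : R, 0 < delta0 /\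
     forall delta : R, 0 <= delta -> delta < delta0 ->
     forall (S : nat -> R) (I : R),
       is_endemic_equilibrium n delta omega r mu p beta S I -> 0 <= I <= 1 ->
       exists y : R, root y /\ `|I - y| <= C * Num.sqrt delta)
  /\
  (* no roots in [0,1] => no endemic equilibria with I* in [0,1] for small delta *)
  ((forall x : R, root x -> ~ (0 <= x <= 1)) ->
     exists delta0 : R, 0 < delta0 /\
     forall delta : R, 0 <= delta -> delta < delta0 ->
     forall (S : nat -> R) (I : R),
       is_endemic_equilibrium n delta omega r mu p beta S I -> ~ (0 <= I <= 1))
  /\
  ((wn + mu) * (mu + r) > beta 0%N * wn + beta n * mu ->
     forall x : R, root x -> ~ (0 <= x <= 1))
  /\
  ((wn + mu) * (mu + r) < beta 0%N * wn + beta n * mu ->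
     exists y : R, (0 <= y <= 1 /\ root y) /\
       forall z : R, 0 <= z <= 1 -> root z -> z = y)
  /\
  ((wn + mu) * (mu + r) = beta 0%N * wn + beta n * mu -> root 0).
Proof.
move=> n_ge1 omega_ge0 r_gt0 mu_gt0 p0 p01 beta0_ge0 beta_step beta0_lt_n wn root.
have [K K_ge0 bound] :=
  equilibrium_poly_bound_uniform (r := r) n_ge1 omega_ge0 mu_gt0 p0 p01 beta0_ge0 beta_step.
have wn_ge0 : 0 <= wn.
  have /andP[pn_ge0 _] : 0 <= p n <= 1 by apply: p01; rewrite n_ge1 leqnn.
  exact: mulr_ge0.
have params : [/\ 0 <= beta 0%N, beta 0%N < beta n, 0 <= wn, 0 < r & 0 < mu] by [].
split.
  have [C C_gt0 [d0 d0_gt0 near]] := endemic_near_root params _ K_ge0.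
  exists C; split=> //; exists d0; split=> // delta delta_ge0 delta_lt S I endemic I01.
  have := bound _ _ _ delta_ge0 endemic I01.
  by move=> /(near _ _ delta_ge0 delta_lt (andP I01).1) [y]; exists y.
split.
  move=> /(poly0_gt0_of_no_unit_root params).
  move=> /(endemic_poly_eventually_gt params _ K_ge0) [d0 d0_gt0 far].
  exists d0; split=> // delta delta_ge0 delta_lt S I endemic I01.
  have := far _ _ delta_ge0 delta_lt (andP I01).1.
  by rewrite ltNge (bound _ _ _ delta_ge0 endemic I01).
split.
  rewrite -subr_gt0 -endemic_poly0 => Q0_gt0 x /endemic_root_poly Qx0 /andP[x_ge0 _].
  by have := endemic_poly_ge_poly0 params _ (ltW Q0_gt0) x_ge0; rewrite Qx0; lra.
split.
  by rewrite -subr_lt0 -endemic_poly0; exact: endemic_unit_root_unique.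
move/eqP; rewrite -subr_eq0 -endemic_poly0 => /eqP Q0.
by apply: (endemic_root_of_poly params); rewrite ?mulr0 ?oppr_lt0.
Qed.
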